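(* In the oligopoly game below, fix $\boldsymbol\sigma\in\{-1,1\}^n$ and let $N_+=\{i:\sigma_i=1\}$, $N_-=\{i:\sigma_i=-1\}$. There exists an equilibrium $(\mathbf A^*,\mathbf q^* )$ with $\mathbf a_i^*=\sigma_i\boldsymbol\beta$ for every $i$ if and only if $$(2+\alpha)-\frac{2+(n+1)\alpha}{2(1+\alpha)}\min_{j\in N_-}\gamma_j\;\le\;\boldsymbol\sigma^\top\boldsymbol\gamma\;\le\;(2+\alpha)+\frac{2+(n+1)\alpha}{2(1+\alpha)}\min_{j\in N_+}\gamma_j,$$ with the convention that the minimum over the empty set is $+\infty$. In such an equilibrium the output profile is uniquely determined as $$\mathbf q^*=\frac{\boldsymbol\gamma}{2+\alpha}-\phi(\boldsymbol\sigma)\,\boldsymbol\sigma,\qquad \phi(\boldsymbol\sigma)=\frac{\alpha(\boldsymbol\sigma^\top\boldsymbol\gamma-(2+\alpha))}{(2+\alpha)(2+(n+1)\alpha)}.$$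
   Context: Model: integers $n\ge2$, $m\ge2$; $\alpha>0$, $\boldsymbol\beta\in\mathbb R^m$ with $\|\boldsymbol\beta\|_2=1$, $\boldsymbol\gamma\in\mathbb R^n$ with all $\gamma_i>0$. Firm $i$ chooses a unit vector $\mathbf a_i\in\mathbb R^m$ and $q_i\ge0$, earning $\Pi_i=\alpha q_i\mathbf a_i^\top(\boldsymbol\beta-\sum_{j\ne i}q_j\mathbf a_j)-(1+\alpha)q_i^2+\gamma_iq_i$. $\mathbf A=[\mathbf a_1,\dots,\mathbf a_n]$. An equilibrium is a profile $(\mathbf A^*,\mathbf q^* )$ in which each $(\mathbf a_i^*,q_i^* )$ maximizes $\Pi_i$ over unit $\mathbf a_i$ and $q_i\ge 0$ given the others' choices. *)

From HB Require Import structures.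
From mathcomp Require Import all_boot all_order all_algebra.
From mathcomp Require Import reals.
Set Implicit Arguments. Unset Strict Implicit. Unset Printing Implicit Defensive.
Import Order.TTheory GRing.Theory Num.Theory.
Local Open Scope ring_scope.

Definition dot (R : realType) (m : nat) (u v : 'cV[R]_m) : R :=
  \sum_(k < m) u k 0 * v k 0.

Definition payoff (R : realType) (m n : nat) (alpha : R) (beta : 'cV[R]_m)
  (gamma : 'I_n -> R) (A : 'M[R]_(m, n)) (q : 'I_n -> R) (i : 'I_n)
  (a : 'cV[R]_m) (x : R) : R :=
  alpha * x * dot a (beta - \sum_(j < n | j != i) q j *: col j A)
  - (1 + alpha) * x ^+ 2 + gamma i * x.

Definition is_equilibrium (R : realType) (m n : nat) (alpha : R)
  (beta : 'cV[R]_m) (gamma : 'I_n -> R) (A : 'M[R]_(m, n)) (q : 'I_n -> R) :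
  Prop :=
  forall i : 'I_n,
    [/\ dot (col i A) (col i A) = 1, 0 <= q i &
      forall (a : 'cV[R]_m) (x : R), dot a a = 1 -> 0 <= x ->
        payoff alpha beta gamma A q i a x
        <= payoff alpha beta gamma A q i (col i A) (q i)].

Definition phi (R : realType) (n : nat) (alpha : R) (gamma sigma : 'I_n -> R)
  : R :=
  alpha * (\sum_(i < n) sigma i * gamma i - (2 + alpha))
  / ((2 + alpha) * (2 + (n%:R + 1) * alpha)).

From HB Require Import structures.
From mathcomp Require Import all_boot all_order all_algebra.
From mathcomp Require Import reals.
From mathcomp.algebra_tactics Require Import ring lra.
Import Order.TTheory GRing.Theory Num.Theory.
Local Open Scope ring_scope.

(* If every firm points along sigma_i beta, firm i's profit from (a, x) is
   x (gamma_i + u_i d) - (1 + alpha) x^2 with d = sigma_i a.beta in [-1, 1] and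
   u_i = alpha (sigma_i (1 - sigma.q) + q_i).  Staying on d = 1 is a best
   response exactly when u_i >= 0 and x solves the first-order condition
   2 (1 + alpha) x = gamma_i + u_i.  These conditions form a linear system
   whose unique solution is q* = gamma / (2 + alpha) - phi sigma, and the sign
   conditions u_i >= 0 at q* are precisely the bounds on sigma.gamma. *)

Lemma quadratic_best_response (R : realFieldType) (k g u q : R) :
  0 < k -> 0 < g ->
  (0 <= q /\ forall x, 0 <= x ->
     x * (g + u) - k * x ^+ 2 <= q * (g + u) - k * q ^+ 2 /\
     x * (g - u) - k * x ^+ 2 <= q * (g + u) - k * q ^+ 2)
  <-> 0 <= u /\ 2 * k * q = g + u.
Proof.
move=> k_gt0 g_gt0; split=> [[q_ge0 opt] | [u_ge0 foc]]; last first.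
  split; first by rewrite -(pmulr_rge0 _ (_ : 0 < 2 * k)); lra.
  have foc' : g = 2 * k * q - u by lra.
  move=> x x_ge0; rewrite foc'.
  have : 0 <= k * (x - q) ^+ 2 by rewrite mulr_ge0 ?sqr_ge0 ?ltW.
  have : 0 <= u * x by exact: mulr_ge0.
  split; nra.
(* If u < 0, comparing with d = -1 at x = q forces q = 0, which is then beaten
   by the positive maximum of x (g - u) - k x^2. *)
have u_ge0 : 0 <= u.
  rewrite leNgt; apply/negP => u_lt0.
  have q0 : q = 0.
    have [_ at_q] := opt q q_ge0.
    have q_le0 : q <= 0 by rewrite -(nmulr_rge0 _ u_lt0); lra.
    by apply/le_anti; rewrite q_le0 q_ge0.
  pose y := (g - u) / (2 * k).
  have y_gt0 : 0 < y by rewrite /y divr_gt0 //; lra.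
  have [_] := opt y (ltW y_gt0); rewrite q0 (_ : g - u = 2 * k * y); last first.
    by rewrite /y; field; lra.
  have : 0 < k * y ^+ 2 by rewrite mulr_gt0 ?exprn_gt0.
  lra.
(* q must coincide with the maximiser z of x (g + u) - k x^2. *)
split=> //.
pose z := (g + u) / (2 * k).
have z_foc : g + u = 2 * k * z by rewrite /z; field; lra.
have [] := opt z; first by rewrite /z divr_ge0 //; lra.
rewrite z_foc => opt_z _.
have : (z - q) ^+ 2 <= 0 by rewrite -(pmulr_rle0 _ k_gt0); lra.
rewrite le_eqVlt ltNge sqr_ge0 orbF sqrf_eq0 subr_eq0 => /eqP z_q.
by rewrite z_q.
Qed.

Section Dot.
Context {R : realType} {m : nat}.
Implicit Types (u v : 'cV[R]_m).

Lemma dotZl u v c : dot (c *: u) v = c * dot u v.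
Proof. by rewrite /dot mulr_sumr; apply: eq_bigr => k _; rewrite mxE mulrA. Qed.

Lemma dotZr u v c : dot u (c *: v) = c * dot u v.
Proof. by rewrite /dot mulr_sumr; apply: eq_bigr => k _; rewrite mxE mulrCA. Qed.

Lemma dot_unit_bound u v : dot u u = 1 -> dot v v = 1 -> -1 <= dot u v <= 1.
Proof.
move=> u_unit v_unit.
have sum_sqr_ge0 (s : R) : 0 <= \sum_(k < m) (u k 0 + s * v k 0) ^+ 2.
  by apply: sumr_ge0 => k _; apply: sqr_ge0.
have sum_sqrE (s : R) : \sum_(k < m) (u k 0 + s * v k 0) ^+ 2
    = dot u u + s ^+ 2 * dot v v + 2 * s * dot u v.
  rewrite /dot !mulr_sumr -!big_split; apply: eq_bigr => k _ /=; ring.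
have := sum_sqr_ge0 1; have := sum_sqr_ge0 (-1).
rewrite !sum_sqrE u_unit v_unit => ? ?; apply/andP; split; lra.
Qed.

End Dot.

Section AlignedProfiles.
Context {R : realType} {n m : nat}.
Variables (alpha : R) (beta : 'cV[R]_m) (gamma sigma : 'I_n -> R).
Hypothesis alpha_gt0 : 0 < alpha.
Hypothesis gamma_gt0 : forall i, 0 < gamma i.
Hypothesis beta_unit : dot beta beta = 1.
Hypothesis sigma_sign : forall i, sigma i = 1 \/ sigma i = -1.

Let sigma_sqr i : sigma i * sigma i = 1.
Proof. by case: (sigma_sign i) => ->; ring. Qed.

Definition signed_total (x : 'I_n -> R) : R := \sum_(j < n) sigma j * x j.

Definition aligned (A : 'M[R]_(m, n)) : Prop :=
  forall j, col j A = sigma j *: beta.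

Lemma payoff_aligned A q i a x : aligned A ->
  payoff alpha beta gamma A q i a x =
  x * (gamma i + alpha * (sigma i * (1 - signed_total q) + q i)
                 * (sigma i * dot a beta))
  - (1 + alpha) * x ^+ 2.
Proof.
move=> A_aligned; rewrite /payoff.
have -> : \sum_(j < n | j != i) q j *: col j A
          = (signed_total q - sigma i * q i) *: beta.
  rewrite /signed_total [X in (X - _) *: _](bigD1 i) //= addrAC subrr add0r.
  rewrite scaler_suml.
  by apply: eq_bigr => j _; rewrite A_aligned scalerA mulrC.
rewrite -[X in dot a (X - _)]scale1r -scalerBl dotZr.
by case: (sigma_sign i) => ->; ring.
Qed.

Lemma aligned_best_responseP A q i : aligned A ->
  (0 <= q i /\ forall a x, dot a a = 1 -> 0 <= x ->
     payoff alpha beta gamma A q i a x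
     <= payoff alpha beta gamma A q i (col i A) (q i)) <->
  0 <= sigma i * (1 - signed_total q) + q i /\
  (2 + alpha) * q i = gamma i + alpha * sigma i * (1 - signed_total q).
Proof.
move=> A_aligned.
set u := alpha * (sigma i * (1 - signed_total q) + q i).
have payoffE a x : payoff alpha beta gamma A q i a x
    = x * (gamma i + u * (sigma i * dot a beta)) - (1 + alpha) * x ^+ 2.
  exact: payoff_aligned.
have signed_dot s : sigma i * dot (s * sigma i *: beta) beta = s.
  by rewrite dotZl beta_unit mulr1 mulrCA sigma_sqr mulr1.
have signed_unit s :
    s ^+ 2 = 1 -> dot (s * sigma i *: beta) (s * sigma i *: beta) = 1.
  move=> s_sqr; rewrite dotZl dotZr beta_unit mulr1.
  by rewrite mulrACA -expr2 s_sqr sigma_sqr mulr1.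
rewrite A_aligned -[sigma i *: _]scale1r scalerA payoffE signed_dot mulr1.
transitivity (0 <= u /\ 2 * (1 + alpha) * q i = gamma i + u).
  rewrite -quadratic_best_response ?gamma_gt0 //; last exact: addr_gt0.
  split=> -[q_ge0 opt]; split=> //.
    move=> x x_ge0.
    have := opt _ x (signed_unit 1 (expr1n _ 2)) x_ge0.
    have := opt _ x (signed_unit (-1) ltac:(by rewrite sqrrN expr1n)) x_ge0.
    by rewrite !payoffE !signed_dot mulr1 mulrN1; split.
  (* the payoff is affine in [sigma i * dot a beta], which lies in [-1, 1] *)
  move=> a x a_unit x_ge0.
  have [d_ge d_le] : -1 <= sigma i * dot a beta /\ sigma i * dot a beta <= 1.
    have /andP[] := dot_unit_bound a beta a_unit beta_unit.
    by case: (sigma_sign i) => ->; split; lra.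
  have [] := opt x x_ge0; rewrite payoffE; nra.
by rewrite /u pmulr_rge0 //; split=> -[? ?]; split=> //; lra.
Qed.

Lemma aligned_equilibrium_conditionsP A q : aligned A ->
  is_equilibrium alpha beta gamma A q <->
  forall i, 0 <= sigma i * (1 - signed_total q) + q i /\
    (2 + alpha) * q i = gamma i + alpha * sigma i * (1 - signed_total q).
Proof.
move=> A_aligned.
have col_unit i : dot (col i A) (col i A) = 1.
  by rewrite A_aligned dotZl dotZr beta_unit mulr1 sigma_sqr.
split=> eq_q i; have := aligned_best_responseP A q i A_aligned.
  by case: (eq_q i) => _ q_ge0 opt [+ _]; apply.
by case=> _ /(_ (eq_q i)) [q_ge0 opt]; split.
Qed.

Lemma eq_signed_total {x y : 'I_n -> R} :
  (forall j, x j = y j) -> signed_total x = signed_total y.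
Proof. by move=> xy; apply: eq_bigr => j _; rewrite xy. Qed.

Lemma signed_total_shift (f x : 'I_n -> R) (y : R) :
  (forall j, f j = x j + y * sigma j) ->
  signed_total f = signed_total x + n%:R * y.
Proof.
move=> f_shift; rewrite /signed_total mulr_natl -[X in _ *+ X]card_ord.
rewrite -sumr_const -big_split; apply: eq_bigr => j _ /=.
by rewrite f_shift mulrDr mulrCA sigma_sqr mulr1.
Qed.

Definition equilibrium_output (i : 'I_n) : R :=
  gamma i / (2 + alpha) - phi alpha gamma sigma * sigma i.

Let phiE : phi alpha gamma sigma = alpha * (signed_total gamma - (2 + alpha))
                                  / ((2 + alpha) * (2 + (n%:R + 1) * alpha)).
Proof. by []. Qed.

Let P_gt0 : 0 < 2 + alpha.
Proof. by rewrite addr_gt0. Qed.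

Let D_gt0 : 0 < 2 + (n%:R + 1) * alpha.
Proof. by rewrite addr_gt0 // mulr_gt0 // ltr_wpDl. Qed.

Lemma equilibrium_residual :
  1 - signed_total equilibrium_output
  = (2 + alpha - signed_total gamma) / (2 + (n%:R + 1) * alpha).
Proof.
rewrite (@signed_total_shift _ (fun j => gamma j / (2 + alpha))
           (- phi alpha gamma sigma)) => [|j]; last by rewrite mulNr.
rewrite /signed_total; under eq_bigr do rewrite mulrA.
rewrite -mulr_suml -/(signed_total gamma) phiE.
by field; rewrite !gt_eqF.
Qed.

Lemma first_order_conditionsP q :
  (forall i, (2 + alpha) * q i
             = gamma i + alpha * sigma i * (1 - signed_total q)) <->
  (forall i, q i = equilibrium_output i).
Proof.
split=> foc i; last first.
  rewrite foc (eq_signed_total foc).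
  rewrite equilibrium_residual /equilibrium_output phiE.
  by field; rewrite !gt_eqF.
have residual : 1 - signed_total q
    = (2 + alpha - signed_total gamma) / (2 + (n%:R + 1) * alpha).
  have total : (2 + alpha) * signed_total q
      = signed_total gamma + n%:R * (alpha * (1 - signed_total q)).
    rewrite -(@signed_total_shift (fun j => (2 + alpha) * q j)) => [|j].
      by rewrite /signed_total mulr_sumr; apply: eq_bigr => j _; rewrite mulrCA.
    by rewrite foc; ring.
  apply: (mulfI (lt0r_neq0 D_gt0)); rewrite mulrCA mulfV ?gt_eqF // mulr1.
  lra.
apply: (mulfI (lt0r_neq0 P_gt0)); rewrite foc residual.
by rewrite /equilibrium_output phiE; field; rewrite !gt_eqF.
Qed.

Lemma equilibrium_margin_ge0 i :
  0 <= sigma i * (1 - signed_total equilibrium_output) + equilibrium_output i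
  <-> sigma i * (signed_total gamma - (2 + alpha))
      <= (2 + (n%:R + 1) * alpha) / (2 * (1 + alpha)) * gamma i.
Proof.
set c := _ / (2 * (1 + alpha)).
have alpha1_gt0 : 0 < 1 + alpha by rewrite addr_gt0.
have c_gt0 : 0 < c by rewrite divr_gt0 // mulr_gt0.
have -> : sigma i * (1 - signed_total equilibrium_output) + equilibrium_output i
    = (c * gamma i - sigma i * (signed_total gamma - (2 + alpha)))
      / (c * (2 + alpha)).
  rewrite equilibrium_residual /equilibrium_output phiE /c.
  by field; rewrite !gt_eqF.
by rewrite pmulr_lge0 ?subr_ge0 // invr_gt0 mulr_gt0.
Qed.

Lemma aligned_equilibriumP A q : aligned A ->
  is_equilibrium alpha beta gamma A q <->
  (forall i, q i = equilibrium_output i) /\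
  (forall i, sigma i * (signed_total gamma - (2 + alpha))
             <= (2 + (n%:R + 1) * alpha) / (2 * (1 + alpha)) * gamma i).
Proof.
move=> A_aligned; rewrite aligned_equilibrium_conditionsP //.
split=> [opt | [q_eq sign] i].
  have q_eq : forall i, q i = equilibrium_output i.
    by apply/first_order_conditionsP => i; case: (opt i).
  split=> // i; rewrite -equilibrium_margin_ge0 -(eq_signed_total q_eq) -q_eq.
  by case: (opt i).
split; last exact: (proj2 (first_order_conditionsP q)).
by rewrite (eq_signed_total q_eq) q_eq equilibrium_margin_ge0.
Qed.

Lemma sign_bound_split (s P c : R) :
  (forall i, sigma i * (s - P) <= c * gamma i) <->
  (forall j, sigma j = -1 -> P - c * gamma j <= s) /\
  (forall j, sigma j = 1 -> s <= P + c * gamma j).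
Proof.
split=> [bound | [lower upper] i].
  by split=> j sigma_j; have := bound j; rewrite sigma_j; lra.
case: (sigma_sign i) => sigma_i; rewrite sigma_i.
  by have := upper i sigma_i; lra.
by have := lower i sigma_i; lra.
Qed.

End AlignedProfiles.

Theorem proposition4 (R : realType) (n m : nat) (alpha : R)
  (beta : 'cV[R]_m) (gamma : 'I_n -> R) (sigma : 'I_n -> R) :
  (2 <= n)%N -> (2 <= m)%N -> 0 < alpha -> dot beta beta = 1 ->
  (forall i, 0 < gamma i) ->
  (forall i, sigma i = 1 \/ sigma i = -1) ->
  let sg := \sum_(i < n) sigma i * gamma i in
  let c := (2 + (n%:R + 1) * alpha) / (2 * (1 + alpha)) in
  ((exists (A : 'M[R]_(m, n)) (q : 'I_n -> R),
      is_equilibrium alpha beta gamma A q /\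
      (forall i, col i A = sigma i *: beta))
   <->
   ((forall j, sigma j = -1 -> (2 + alpha) - c * gamma j <= sg) /\
    (forall j, sigma j = 1 -> sg <= (2 + alpha) + c * gamma j)))
  /\
  (forall (A : 'M[R]_(m, n)) (q : 'I_n -> R),
      is_equilibrium alpha beta gamma A q ->
      (forall i, col i A = sigma i *: beta) ->
      forall i, q i = gamma i / (2 + alpha) - phi alpha gamma sigma * sigma i).
Proof.
move=> _ _ alpha_gt0 beta_unit gamma_gt0 sigma_sign sg c.
have equilibriumP :=
  aligned_equilibriumP _ _ _ _ alpha_gt0 gamma_gt0 beta_unit sigma_sign.
split; last first.
  by move=> A q eq_Aq A_aligned; have [] := (equilibriumP A q A_aligned).1 eq_Aq.
rewrite -(sign_bound_split gamma _ sigma_sign); split.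
  move=> [A [q [eq_Aq A_aligned]]].
  by have [] := (equilibriumP A q A_aligned).1 eq_Aq.
move=> sign_bound.
pose A : 'M[R]_(m, n) := \matrix_(k, j) (sigma j * beta k 0).
have A_aligned : aligned beta sigma A.
  by move=> j; apply/matrixP => k l; rewrite !mxE (ord1 l).
exists A, (equilibrium_output alpha gamma sigma); split=> //.
exact/(equilibriumP _ _ A_aligned).
Qed.
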